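(* For all $n\geq 0$, $$d_n=\sum_{k=0}^{n}(-1)^{n-k}\binom{n}{k}m_k,$$ where $d_n$ is the number of symmetric Dyck paths of length $2n$ and $m_k$ is the number of symmetric Motzkin paths of length $2k$.
   Context: Steps: $U=(1,1)$, $D=(1,-1)$, $h=(1,0)$. A Dyck path of length $2n$ is a lattice path from $(0,0)$ to $(2n,0)$ using steps $U,D$ that never goes below the $x$-axis; a Motzkin path of length $2n$ is the same but steps $U,D,h$ are allowed. Such a path with step sequence $s_1\cdots s_{2n}$ is symmetric if for every $i$, $s_{2n+1-i}$ is the mirror of $s_i$ (mirror of $U$ is $D$, of $D$ is $U$, of $h$ is $h$), i.e. the path is invariant under reflection in the line $x=n$. *)

From HB Require Import structures.
From mathcomp Require Import all_boot all_order all_algebra.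
Set Implicit Arguments. Unset Strict Implicit. Unset Printing Implicit Defensive.
Import GRing.Theory Num.Theory.
Local Open Scope ring_scope.

(* Steps U = (1,1), D = (1,-1), h = (1,0). *)
Inductive step := U | D | H.

Definition step_code (s : step) : 'I_3 :=
  match s with U => inord 0 | D => inord 1 | H => inord 2 end.
Definition step_decode (i : 'I_3) : step :=
  match val i with 0 => U | 1 => D | _ => H end.
Lemma step_codeK : cancel step_code step_decode.
Proof. by case; rewrite /step_decode /= inordK. Qed.
HB.instance Definition _ := Equality.copy step (can_type step_codeK).
HB.instance Definition _ := Finite.copy step (can_type step_codeK).

Definition dy (s : step) : int := match s with U => 1 | D => -1 | H => 0 end.

(* mirror image of a step under reflection in a vertical line *)
Definition mirror (s : step) : step := match s with U => D | D => U | H => H end.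

Definition height (p : seq step) (i : nat) : int := \sum_(x <- take i p) dy x.

Definition nonneg_bridge (p : seq step) : bool :=
  [forall i : 'I_(size p).+1, (0 <= height p i)%R] && (height p (size p) == 0%R).

Definition dyck (p : seq step) : bool := nonneg_bridge p && (H \notin p).
Definition motzkin (p : seq step) : bool := nonneg_bridge p.

(* symmetric: s_{N+1-i} is the mirror of s_i (1-indexed), N = size p *)
Definition sym_path (p : seq step) : bool :=
  [forall i : 'I_(size p), nth H p (size p - 1 - i)%N == mirror (nth H p i)].

Definition d_num (n : nat) : nat :=
  #|[set p : (n.*2).-tuple step | dyck p && sym_path p]|.

Definition m_num (n : nat) : nat :=
  #|[set p : (n.*2).-tuple step | motzkin p && sym_path p]|.

From mathcomp Require Import all_boot all_order all_algebra.
From mathcomp Require Import zify.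
Set Implicit Arguments. Unset Strict Implicit. Unset Printing Implicit Defensive.
Import Order.TTheory GRing.Theory Num.Theory.
Local Open Scope ring_scope.

(* A symmetric path of length 2n is determined by its first half, and a word of
   length n is the first half of a symmetric Dyck (Motzkin) path exactly when it
   never goes below the axis; so d_n and m_n count such "meanders" of length n.
   Deleting the level steps of a Motzkin meander leaves a Dyck meander, whence
   m is the binomial transform of d, and binomial inversion gives the formula.
   The binomial relation follows by induction on the length once meanders are
   allowed to start at an arbitrary height h. *)

Section BinomialTransform.
Variable V : nmodType.

Definition binomial_transform (a : nat -> V) (n : nat) : V :=
  \sum_(k < n.+1) a k *+ 'C(n, k).

Lemma binomial_transformD (a b : nat -> V) n :
  binomial_transform (fun k => a k + b k) n =
  binomial_transform a n + binomial_transform b n.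
Proof. by rewrite -big_split; apply: eq_bigr => k _; rewrite mulrnDl. Qed.

Lemma binomial_transformS (a : nat -> V) n :
  binomial_transform a n.+1 =
  binomial_transform a n + binomial_transform (fun k => a k.+1) n.
Proof.
rewrite /binomial_transform big_ord_recl /=.
under eq_bigr => k _ do rewrite binS mulrnDr.
rewrite big_split /= addrA; congr (_ + _).
rewrite big_ord_recr /= (bin_small (ltnSn n)) mulr0n addr0.
by rewrite [in RHS]big_ord_recl !bin0.
Qed.

End BinomialTransform.

Section BinomialInversion.
Variable R : pzRingType.

Definition inverse_binomial_transform (b : nat -> R) (n : nat) : R :=
  \sum_(k < n.+1) (-1) ^+ (n - k) * b k *+ 'C(n, k).

Lemma inverse_binomial_transformS (b : nat -> R) n :
  inverse_binomial_transform b n.+1 =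
  inverse_binomial_transform (fun k => b k.+1) n - inverse_binomial_transform b n.
Proof.
rewrite /inverse_binomial_transform big_ord_recl /=.
under eq_bigr => k _ do rewrite binS mulrnDr subSS.
rewrite big_split /= addrA addrC; congr (_ + _).
rewrite [in RHS]big_ord_recl opprD subn0 subn0 exprS mulN1r mulNr bin0 mulNrn.
rewrite big_ord_recr /= (bin_small (ltnSn n)) mulr0n addr0 bin0.
rewrite -sumrN; congr (_ + _); apply: eq_bigr => k _.
by rewrite /bump /= add1n -(subnSK (ltn_ord k)) exprS mulN1r !mulNr mulNrn.
Qed.

Lemma inverse_binomial_transformD (b c : nat -> R) n :
  inverse_binomial_transform (fun k => b k + c k) n =
  inverse_binomial_transform b n + inverse_binomial_transform c n.
Proof.
by rewrite -big_split; apply: eq_bigr => k _; rewrite mulrDr mulrnDl.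
Qed.

Lemma binomial_inversion (a : nat -> R) n :
  inverse_binomial_transform (binomial_transform a) n = a n.
Proof.
elim: n a => [|n IHn] a.
  by rewrite /inverse_binomial_transform /binomial_transform !big_ord1 /= !mulr1n mul1r.
rewrite inverse_binomial_transformS.
transitivity (inverse_binomial_transform
  (fun k => binomial_transform a k + binomial_transform (fun j => a j.+1) k) n
  - inverse_binomial_transform (binomial_transform a) n).
  by congr (_ - _); apply: eq_bigr => k _; rewrite binomial_transformS.
by rewrite inverse_binomial_transformD !IHn [a n + _]addrC addrK.
Qed.

End BinomialInversion.


Fixpoint words n : seq (seq step) :=
  if n is n'.+1 then [seq x :: w | x <- [:: U; D; H], w <- words n'] else [:: [::]].

Lemma mem_words n w : (w \in words n) = (size w == n).
Proof.
elim: n w => [|n IHn] [|x w] //=; rewrite cats0 !mem_cat.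
  by apply/negP; case/or3P => /mapP [v _].
apply/idP/idP.
  by case/or3P => /mapP [v vn [_ ->]]; rewrite eqSS -IHn.
by rewrite eqSS -IHn => wn; case: x; rewrite map_f ?orbT.
Qed.

Lemma words_uniq n : uniq (words n).
Proof.
elim: n => [|n IHn] //; apply: allpairs_uniq => //.
  by rewrite /= !inE; apply/and3P; split => //; [apply/norP; split|]; apply/eqP.
by move=> [x w] [y v] _ _ /= [-> ->].
Qed.

Lemma card_tuples_count m (P : pred (seq step)) :
  #|[set p : m.-tuple step | P p]| = count P (words m).
Proof.
rewrite cardsE cardE -size_filter -(size_map val).
apply/perm_size/uniq_perm.
- by rewrite map_inj_uniq ?enum_uniq //; exact: val_inj.
- by rewrite filter_uniq // words_uniq.
move=> w; rewrite mem_filter mem_words; apply/mapP/idP.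
  by move=> [t tP ->]; rewrite mem_enum in tP; rewrite size_tuple eqxx andbT.
by case/andP => Pw wm; exists (Tuple wm); rewrite ?mem_enum.
Qed.

Lemma count_wordsS (P : pred (seq step)) n :
  count P (words n.+1) = (count (fun w => P (U :: w)) (words n) +
    count (fun w => P (D :: w)) (words n) + count (fun w => P (H :: w)) (words n))%N.
Proof. by rewrite /= cats0 !count_cat !count_map addnA. Qed.

Definition rise (w : seq step) : int := \sum_(x <- w) dy x.

Lemma rise_cons x w : rise (x :: w) = dy x + rise w.
Proof. by rewrite /rise big_cons. Qed.

Lemma rise_cat v w : rise (v ++ w) = rise v + rise w.
Proof. by rewrite /rise big_cat. Qed.

Lemma rise_rev w : rise (rev w) = rise w.
Proof. by apply: perm_big; rewrite perm_rev. Qed.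

Lemma dy_mirror x : dy (mirror x) = - dy x.
Proof. by case: x; rewrite /= ?opprK ?oppr0. Qed.

Lemma rise_mirror w : rise (map mirror w) = - rise w.
Proof. by rewrite /rise big_map (eq_bigr _ (fun x _ => dy_mirror x)) sumrN. Qed.

Lemma mirrorK : involutive mirror.
Proof. by case. Qed.

Fixpoint nonneg_from (h : int) (w : seq step) : bool :=
  (0 <= h) && (if w is x :: w' then nonneg_from (h + dy x) w' else true).

Lemma nonneg_fromP h w :
  reflect (forall i, (i <= size w)%N -> 0 <= h + rise (take i w)) (nonneg_from h w).
Proof.
have rise_nil : rise [::] = 0 by rewrite /rise big_nil.
elim: w h => [|x w IHw] h /=.
  rewrite andbT rise_nil addr0.
  by apply: (iffP idP) => [h_ge0 i _ | /(_ 0%N (leqnn 0))].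
apply: (iffP andP) => [[h_ge0 /IHw wP] [|i] i_le | wP].
- by rewrite take0 rise_nil addr0.
- by rewrite /= rise_cons addrA wP.
split; first by have := wP 0%N isT; rewrite take0 rise_nil addr0.
by apply/IHw => i i_le; rewrite -addrA -rise_cons; exact: (wP i.+1).
Qed.

Lemma nonneg_from_ge0 h w : nonneg_from h w -> 0 <= h.
Proof. by case: w => [|x w] /andP []. Qed.

Lemma nonneg_from_cat h v w :
  nonneg_from h (v ++ w) = nonneg_from h v && nonneg_from (h + rise v) w.
Proof.
elim: v h => [|x v IHv] h /=.
  by rewrite /rise big_nil addr0 andbT; case: w => [|y w] /=; rewrite ?andbT ?andbA andbb.
by rewrite IHv rise_cons addrA andbA.
Qed.

Lemma nonneg_bridgeE p : nonneg_bridge p = nonneg_from 0 p && (rise p == 0).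
Proof.
rewrite /nonneg_bridge /height take_size; congr (_ && _).
apply/forallP/nonneg_fromP => [pP i i_le | pP i].
  by rewrite add0r; exact: (pP (Ordinal (i_le : (i < (size p).+1)%N))).
by rewrite -[X in _ <= X]add0r pP // -ltnS.
Qed.

(* Read backwards, a mirrored path ends where it started, with the same heights. *)
Lemma nonneg_from_mirror_rev h w :
  nonneg_from (h + rise w) (rev (map mirror w)) = nonneg_from h w.
Proof.
elim: w h => [|x w IHw] h; first by rewrite /= /rise big_nil addr0.
rewrite /= rev_cons -cats1 nonneg_from_cat rise_cons addrA IHw.
rewrite rise_rev rise_mirror addrK /= dy_mirror addrK andbT.
case wP: (nonneg_from _ w); last by rewrite andbF.
by rewrite (nonneg_from_ge0 wP) andbT.
Qed.

Definition symmetrize (w : seq step) : seq step := w ++ rev (map mirror w).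

Lemma nonneg_bridge_symmetrize w : nonneg_bridge (symmetrize w) = nonneg_from 0 w.
Proof.
rewrite nonneg_bridgeE nonneg_from_cat.
by rewrite nonneg_from_mirror_rev rise_cat rise_rev rise_mirror subrr eqxx andbb andbT.
Qed.

Lemma mem_H_symmetrize w : (H \in symmetrize w) = (H \in w).
Proof.
by rewrite mem_cat mem_rev -[in H \in map _ _]/(mirror H) (mem_map (inv_inj mirrorK)) orbb.
Qed.

Lemma sym_pathE p : sym_path p = (rev p == map mirror p).
Proof.
apply/forallP/eqP => [pP | pE i].
  apply: (eq_from_nth (x0 := H)) => [|i]; first by rewrite size_rev size_map.
  rewrite size_rev => i_lt; rewrite nth_rev // (nth_map H) //.
  by move/eqP: (pP (Ordinal i_lt)) => /= <-; congr nth; lia.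
have := congr1 (nth H ^~ i) pE; rewrite /= nth_rev // (nth_map H) // => <-.
by apply/eqP; congr nth; lia.
Qed.

Lemma sym_path_symmetrize w : sym_path (symmetrize w).
Proof. by rewrite sym_pathE rev_cat revK map_cat map_rev (mapK mirrorK). Qed.

Lemma size_take_half (T : Type) (p : seq T) m : size p = m.*2 -> size (take m p) = m.
Proof. by move=> p_size; rewrite size_takel // p_size -addnn leq_addr. Qed.

Lemma symmetrize_take p m :
  size p = m.*2 -> sym_path p -> symmetrize (take m p) = p.
Proof.
rewrite sym_pathE => p_size /eqP pE.
have size_drop_m : size (drop m p) = m by rewrite size_drop p_size -addnn addnK.
rewrite /symmetrize -[in RHS](cat_take_drop m p); congr (_ ++ _).
move/eqP: pE; rewrite -[in X in X -> _](cat_take_drop m p) rev_cat map_cat.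
by rewrite eqseq_cat ?size_rev ?size_map ?size_take_half // => /andP [/eqP <- _]; rewrite revK.
Qed.

Lemma symmetrize_inj : injective symmetrize.
Proof.
move=> v w vw; have size_vw : size v = size w.
  by have := congr1 size vw; rewrite !size_cat !size_rev !size_map; lia.
by move/eqP: vw; rewrite eqseq_cat // => /andP [/eqP].
Qed.

Lemma count_sym_path (P : pred (seq step)) m :
  count (fun p => P p && sym_path p) (words m.*2) =
  count (fun w => P (symmetrize w)) (words m).
Proof.
rewrite -!size_filter -[in RHS](size_map symmetrize).
apply/perm_size/uniq_perm.
- by rewrite filter_uniq // words_uniq.
- by rewrite (map_inj_uniq symmetrize_inj) filter_uniq // words_uniq.
move=> p; rewrite mem_filter mem_words; apply/idP/mapP.
  case/andP => /andP [Pp p_sym] /eqP p_size; exists (take m p); last by rewrite symmetrize_take.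
  by rewrite mem_filter mem_words symmetrize_take // Pp size_take_half ?eqxx.
move=> [w]; rewrite mem_filter mem_words => /andP [Pw /eqP w_size] ->.
by rewrite Pw sym_path_symmetrize size_cat size_rev size_map w_size addnn eqxx.
Qed.

Definition dyck_meanders n h := count (fun w => nonneg_from h w && (H \notin w)) (words n).
Definition motzkin_meanders n h := count (nonneg_from h) (words n).

Lemma dyck_meanders0 h : dyck_meanders 0 h = (0 <= h).
Proof. by rewrite /dyck_meanders /= andbT; case: (0 <= h). Qed.

Lemma motzkin_meanders0 h : motzkin_meanders 0 h = (0 <= h).
Proof. by rewrite /motzkin_meanders /= andbT; case: (0 <= h). Qed.

Lemma dyck_meanders_neg n h : h < 0 -> dyck_meanders n h = 0%N.
Proof.
move=> h_lt0; apply/eqP; rewrite -leqn0 leqNgt -has_count.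
by apply/hasP => -[w _ /andP [/nonneg_from_ge0]]; rewrite leNgt h_lt0.
Qed.

Lemma dyck_meandersS n h : 0 <= h ->
  dyck_meanders n.+1 h = (dyck_meanders n (h + 1) + dyck_meanders n (h - 1))%N.
Proof.
move=> h_ge0; rewrite /dyck_meanders count_wordsS.
rewrite [X in (_ + X)%N](@eq_count _ _ pred0) ?count_pred0 ?addn0 => [|w].
  have [HU HD] : (H == U) = false /\ (H == D) = false by split; apply/eqP.
  by congr addn; apply: eq_count => w; rewrite /= h_ge0 inE ?HU ?HD.
by rewrite /= inE eqxx andbF.
Qed.

Lemma motzkin_meandersS n h : 0 <= h ->
  motzkin_meanders n.+1 h =
  (motzkin_meanders n (h + 1) + motzkin_meanders n (h - 1) + motzkin_meanders n h)%N.
Proof. by move=> h_ge0; rewrite /motzkin_meanders count_wordsS /= h_ge0 addr0. Qed.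

Lemma motzkin_meanders_neg n h : h < 0 -> motzkin_meanders n h = 0%N.
Proof.
move=> h_lt0; apply/eqP; rewrite -leqn0 leqNgt -has_count.
by apply/hasP => -[w _ /nonneg_from_ge0]; rewrite leNgt h_lt0.
Qed.

Lemma motzkin_meanders_binomial n h :
  (motzkin_meanders n h)%:Z = binomial_transform (fun k => (dyck_meanders k h)%:Z) n.
Proof.
elim: n h => [|n IHn] h.
  by rewrite /binomial_transform big_ord1 motzkin_meanders0 dyck_meanders0.
have [h_ge0 | h_lt0] := leP 0 h; last first.
  rewrite motzkin_meanders_neg // /binomial_transform big1 // => k _.
  by rewrite dyck_meanders_neg ?mul0rn.
rewrite motzkin_meandersS // !PoszD !IHn binomial_transformS addrC.
congr (_ + _); rewrite -binomial_transformD.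
by apply: eq_bigr => k _; rewrite dyck_meandersS // PoszD.
Qed.

Lemma d_num_meanders n : d_num n = dyck_meanders n 0.
Proof.
rewrite /d_num (card_tuples_count _ (fun p => dyck p && sym_path p)).
rewrite (count_sym_path dyck); apply: eq_count => w.
by rewrite /dyck nonneg_bridge_symmetrize mem_H_symmetrize.
Qed.

Lemma m_num_meanders n : m_num n = motzkin_meanders n 0.
Proof.
rewrite /m_num (card_tuples_count _ (fun p => motzkin p && sym_path p)).
rewrite (count_sym_path motzkin); apply: eq_count => w.
by rewrite /motzkin nonneg_bridge_symmetrize.
Qed.

Theorem theorem3p2 (n : nat) :
  (d_num n)%:Z = \sum_(0 <= k < n.+1) (-1) ^+ (n - k) * ('C(n, k) * m_num k)%:Z.
Proof.
have m_binomial k : (m_num k)%:Z = binomial_transform (fun j => (d_num j)%:Z) k.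
  rewrite m_num_meanders motzkin_meanders_binomial.
  by apply: eq_bigr => j _; rewrite d_num_meanders.
rewrite -[LHS](binomial_inversion (fun j => (d_num j)%:Z)) big_mkord.
by apply: eq_bigr => k _; rewrite -m_binomial -mulrnAr PoszM -[Posz 'C(n, k)]natz mulr_natl.
Qed.
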